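(* Assume all features are binary, $x_{i,k}\in\{0,1\}$. Let $0<\lambda\le\lambda_0$. Let $\boldsymbol\alpha_0^\star$ be the optimal solution of $\max_{\boldsymbol\alpha\ge\mathbf0}D_{\lambda_0}(\boldsymbol\alpha)$, and let $\boldsymbol\alpha_0\in\mathbb R^{2nK}_{\ge0}$ and $\epsilon\ge0$ satisfy $\|\boldsymbol\alpha_0-\boldsymbol\alpha_0^\star\|_2\le\epsilon$. Let $\mathbf m^\star$ be the optimal solution of $\min_{\mathbf m\ge\mathbf0}P_\lambda(\mathbf m)$. For $k\in[p]$ let $$a=\sum_{i\in[n]}\max\Big\{\sum_{l\in\mathcal D_i}(\alpha_0)_{il}x_{l,k},\;x_{i,k}\Big[\sum_{l\in\mathcal D_i}(\alpha_0)_{il}-\sum_{j\in\mathcal S_i}(\alpha_0)_{ij}(1-x_{j,k})\Big]\Big\},$$ $$b=\sqrt{\sum_{i\in[n]}\Big[\sum_{l\in\mathcal D_i}\max\{x_{i,k},x_{l,k}\}+\sum_{j\in\mathcal S_i}\max\{x_{i,k},x_{j,k}\}\Big]},\qquad\lambda'_a=\frac{\lambda_0(2\epsilon b+\|\boldsymbol\alpha_0\|_2b+a)}{2\lambda_0+\|\boldsymbol\alpha_0\|_2b-a}.$$ If $\lambda'_a\le\lambda\le\lambda_0$, then $m^\star_{k'}=0$ for every descendant $k'\supseteq k$.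
   Context: Let $n,K,p\ge1$ be integers, $[n]=\{1,\dots,n\}$. For each $i\in[n]$ let $\mathbf x_i=(x_{i,1},\dots,x_{i,p})^\top\in\mathbb R^p$ and let $\mathcal D_i,\mathcal S_i\subseteq[n]$ be sets of size $K$. Put $\mathbf c_{ij}=(\mathbf x_i-\mathbf x_j)\circ(\mathbf x_i-\mathbf x_j)$ (entrywise product). Vectors in $\mathbb R^{2nK}$ are indexed by the pairs $(i,l)$, $l\in\mathcal D_i$ (''different-class pairs'') and $(i,j)$, $j\in\mathcal S_i$ (''same-class pairs''); $\boldsymbol\alpha_0$ has entries $(\alpha_0)_{il},(\alpha_0)_{ij}$. $\mathbf C\in\mathbb R^{p\times2nK}$ has column $\mathbf c_{il}$ for each different-class pair and $-\mathbf c_{ij}$ for each same-class pair. Fix $L\ge U\ge0$, $\eta>0$; let $\mathbf t\in\mathbb R^{2nK}$ have entry $L$ at different-class pairs and $-U$ at same-class pairs; $\ell_s(x)=([s-x]_+)^2$ with $[z]_+=\max\{z,0\}$ (entrywise for vectors); $\mathbf1$ is the all-ones vector. For $\lambda>0$, $$P_\lambda(\mathbf m)=\sum_{i\in[n]}\Big[\sum_{l\in\mathcal D_i}\ell_L(\mathbf m^\top\mathbf c_{il})+\sum_{j\in\mathcal S_i}\ell_{-U}(-\mathbf m^\top\mathbf c_{ij})\Big]+\lambda\Big(\mathbf m^\top\mathbf1+\frac\eta2\|\mathbf m\|_2^2\Big)\ (\mathbf m\in\mathbb R^p_{\ge0}),$$ $$D_\lambda(\boldsymbol\alpha)=-\frac14\|\boldsymbol\alpha\|_2^2+\mathbf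 t^\top\boldsymbol\alpha-\frac{\lambda\eta}2\Big\|\frac1{\lambda\eta}[\mathbf C\boldsymbol\alpha-\lambda\mathbf1]_+\Big\|_2^2\ (\boldsymbol\alpha\in\mathbb R^{2nK}_{\ge0}).$$ The feature indices $[p]$ are nodes of a rooted graph-mining tree: $x_{i,k}=g(\#(H_k\sqsubseteq G_i))$ with $g(x)=1_{x>0}$, where $H_k$ is the subgraph at node $k$, $G_i$ the $i$-th input graph, $\#(H\sqsubseteq G)$ the number of non-overlapping occurrences of $H$ in $G$, and each node's subgraph is contained in its children's subgraphs. Write $k'\supseteq k$ if $k'$ is a descendant of $k$; then $x_{i,k'}\le x_{i,k}$ for all $i$ whenever $k'\supseteq k$. *)

From mathcomp Require Import all_boot all_order all_algebra.
From mathcomp Require Import reals.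
Set Implicit Arguments. Unset Strict Implicit. Unset Printing Implicit Defensive.
Import Order.TTheory GRing.Theory Num.Theory.
Local Open Scope ring_scope.

Section Defs.
Variables (R : realType) (n p : nat).
Variable x : 'I_n -> 'I_p -> R.
Variables (D S : 'I_n -> {set 'I_n}).

Definition cvec (i j : 'I_n) (k : 'I_p) : R := (x i k - x j k) ^+ 2.

Definition mdotc (m : 'I_p -> R) (i j : 'I_n) : R := \sum_(k < p) m k * cvec i j k.

Definition sqhinge (s y : R) : R := (Num.max (s - y) 0) ^+ 2.

Definition Pobj (L U eta lam : R) (m : 'I_p -> R) : R :=
  \sum_(i < n) (\sum_(l in D i) sqhinge L (mdotc m i l)
               + \sum_(j in S i) sqhinge (- U) (- mdotc m i j))
  + lam * (\sum_(k < p) m k + eta / 2 * \sum_(k < p) m k ^+ 2).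

(* A dual vector alpha in R^{2nK}, indexed by the pairs (i,l), l in D i
   (component aD i l) and (i,j), j in S i (component aS i j); values of
   aD/aS outside these pairs are irrelevant. *)
Record dvec := DVec { aD : 'I_n -> 'I_n -> R; aS : 'I_n -> 'I_n -> R }.

Definition dnonneg (al : dvec) : Prop :=
  (forall i l, l \in D i -> 0 <= aD al i l) /\
  (forall i j, j \in S i -> 0 <= aS al i j).

Definition dnorm2 (al : dvec) : R :=
  \sum_(i < n) (\sum_(l in D i) aD al i l ^+ 2 + \sum_(j in S i) aS al i j ^+ 2).

Definition dnorm (al : dvec) : R := Num.sqrt (dnorm2 al).

Definition dsub (a1 a2 : dvec) : dvec :=
  DVec (fun i l => aD a1 i l - aD a2 i l) (fun i j => aS a1 i j - aS a2 i j).

Definition tdot (L U : R) (al : dvec) : R :=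
  \sum_(i < n) (\sum_(l in D i) L * aD al i l + \sum_(j in S i) (- U) * aS al i j).

Definition Cmul (al : dvec) (k : 'I_p) : R :=
  \sum_(i < n) (\sum_(l in D i) aD al i l * cvec i l k
               - \sum_(j in S i) aS al i j * cvec i j k).

Definition Dobj (L U eta lam : R) (al : dvec) : R :=
  - (1 / 4) * dnorm2 al + tdot L U al
  - lam * eta / 2 *
    \sum_(k < p) ((Num.max (Cmul al k - lam) 0) / (lam * eta)) ^+ 2.

Definition rule_a (al : dvec) (k : 'I_p) : R :=
  \sum_(i < n) Num.max (\sum_(l in D i) aD al i l * x l k)
     (x i k * (\sum_(l in D i) aD al i l
               - \sum_(j in S i) aS al i j * (1 - x j k))).

Definition rule_b (k : 'I_p) : R :=
  Num.sqrt (\sum_(i < n) (\sum_(l in D i) Num.max (x i k) (x l k)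
                          + \sum_(j in S i) Num.max (x i k) (x j k))).

Definition lambda_a (lam0 eps : R) (al : dvec) (k : 'I_p) : R :=
  lam0 * (2 * eps * rule_b k + dnorm al * rule_b k + rule_a al k)
  / (2 * lam0 + dnorm al * rule_b k - rule_a al k).

End Defs.

(* Rooted tree on the feature indices given by a parent map; the root is
   a fixed point of [parent]. k' is a descendant of k (k' ⊇ k, including
   k' = k) iff k is reached from k' by following parent links. *)
Definition descendant (p : nat) (parent : 'I_p -> 'I_p) (k' k : 'I_p) : Prop :=
  exists t : nat, iter t parent k' = k.

Definition rooted_tree (p : nat) (parent : 'I_p -> 'I_p) (root : 'I_p) : Prop :=
  parent root = root /\ forall k, exists t : nat, iter t parent k = root.

(* The dual D_λ is 1/2-strongly concave, so every maximizer α of D_λ over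
   α ≥ 0 satisfies D_λ(β) + |α - β|²/4 ≤ D_λ(α). Strong duality, obtained
   from the coordinatewise KKT conditions of P_λ, shows that
   α⋆ = 2[t - Cᵀm⋆]_+ is such a maximizer. The penalty part of D is
   positively homogeneous in (α, λ), so comparing D_λ at α⋆ and at s α0⋆, and
   D_λ0 at α0⋆ and at α⋆/s (s = λ/λ0), confines α⋆ to the ball with centre
   (1+s)/2 α0⋆ and radius (1-s)/2 |α0⋆|. On that ball
   (Cα⋆)_k' ≤ (1-s)/2 (|α0| + ε) b + (1+s)/2 (a + ε b), because binary
   features decreasing along the tree give |c_k'| ≤ b and ⟨α0, c_k'⟩ ≤ a;
   this bound is ≤ λ exactly when λ'_a ≤ λ. Finally the KKT conditions force
   m⋆_k' = 0 whenever (Cα⋆)_k' ≤ λ. *)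

From mathcomp Require Import all_boot all_order all_algebra.
From mathcomp Require Import reals.
From mathcomp Require Import ring lra.
Set Implicit Arguments. Unset Strict Implicit. Unset Printing Implicit Defensive.
Import Order.TTheory GRing.Theory Num.Theory.
Local Open Scope ring_scope.

Section ScalarFacts.
Variable R : realFieldType.
Implicit Types b c d g h u v t th A B X Y Z M : R.

Lemma discriminant_le A X B : 0 <= A ->
  (forall t, 0 <= t ^+ 2 * A - 2 * t * X + B) -> X ^+ 2 <= A * B.
Proof.
move=> hA hq; have [A0|A0] := eqVneq A 0.
  have [X0|X0] := eqVneq X 0; first by rewrite X0 expr0n /= A0 mul0r.
  have := hq ((B + 1) / (2 * X)); rewrite A0 mulr0 add0r.
  have -> : 2 * ((B + 1) / (2 * X)) * X = B + 1 by field; rewrite X0.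
  lra.
have Apos : 0 < A by rewrite lt_def A0.
have := hq (X / A).
have -> : (X / A) ^+ 2 * A - 2 * (X / A) * X + B = (A * B - X ^+ 2) / A by field.
by rewrite pmulr_lge0 ?invr_gt0 // subr_ge0.
Qed.

Lemma ler_of_forall_shrink Z Y :
  0 <= Z -> (forall th, 0 < th <= 1 -> (1 - th) * Z <= Y) -> Z <= Y.
Proof.
move=> hZ h; have hY : 0 <= Y by have := h 1; rewrite subrr mul0r; apply; lra.
rewrite leNgt; apply/negP => hlt.
have Zpos : 0 < Z by apply: le_lt_trans hY hlt.
have hth : 0 < (Z - Y) / (2 * Z) <= 1.
  by apply/andP; split; [apply: divr_gt0; lra | rewrite ler_pdivrMr; lra].
have := h _ hth.
have -> : (1 - (Z - Y) / (2 * Z)) * Z = (Z + Y) / 2 by field; rewrite gt_eqF.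
lra.
Qed.

Lemma ge0_of_small_steps g c M : 0 < M -> 0 <= c ->
  (forall h, 0 < h <= M -> 0 <= h * g + h ^+ 2 * c) -> 0 <= g.
Proof.
move=> hM hc hh; rewrite leNgt; apply/negP => hg.
set h := Num.min M (- g / (c + 1)).
have h0 : 0 < h by rewrite lt_min hM /= divr_gt0 //; lra.
have h1 : h <= M by rewrite ge_min lexx.
have h2 : h * (c + 1) <= - g by rewrite -ler_pdivlMr ?ge_min ?lexx ?orbT //; lra.
have := hh h; rewrite h0 h1 => /(_ isT); nra.
Qed.

Lemma sqr_maxr0_convex th u v : 0 <= th <= 1 ->
  Num.max ((1 - th) * u + th * v) 0 ^+ 2 <=
  (1 - th) * Num.max u 0 ^+ 2 + th * Num.max v 0 ^+ 2.
Proof.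
move=> /andP[th0 th1].
set A := Num.max u 0; set B := Num.max v 0.
have hA : u <= A /\ 0 <= A by rewrite /A !le_max !lexx orbT.
have hB : v <= B /\ 0 <= B by rewrite /B !le_max !lexx orbT.
have hM : Num.max ((1 - th) * u + th * v) 0 <= (1 - th) * A + th * B.
  by rewrite ge_max; apply/andP; split; nra.
apply: le_trans (_ : _ <= ((1 - th) * A + th * B) ^+ 2) _.
  by rewrite ler_sqr ?nnegrE ?le_max ?lexx ?orbT //; nra.
rewrite -subr_ge0.
have -> : (1 - th) * A ^+ 2 + th * B ^+ 2 - ((1 - th) * A + th * B) ^+ 2
          = th * (1 - th) * (A - B) ^+ 2 by ring.
by rewrite mulr_ge0 ?sqr_ge0 // mulr_ge0 //; lra.
Qed.

Lemma sqr_maxr0_addr u d :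
  Num.max (u + d) 0 ^+ 2 <= Num.max u 0 ^+ 2 + 2 * Num.max u 0 * d + d ^+ 2.
Proof. by case: (lerP 0 u) => hu; case: (lerP 0 (u + d)) => hud; nra. Qed.

(* Fenchel-Young gaps: [y]_+^2 has conjugate b^2/4 on b >= 0, and
   lam (m + eta/2 m^2) on m >= 0 has conjugate [v - lam]_+^2 / (2 lam eta). *)
Definition hinge_gap u b : R := Num.max u 0 ^+ 2 - b * u + b ^+ 2 / 4.

Definition reg_gap eta lam m v : R :=
  lam * m + lam * eta / 2 * m ^+ 2 - v * m
  + lam * eta / 2 * (Num.max (v - lam) 0 / (lam * eta)) ^+ 2.

Lemma hinge_gap_ge u b : 0 <= b -> (b - 2 * Num.max u 0) ^+ 2 / 4 <= hinge_gap u b.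
Proof.
move=> hb; have hu : u <= Num.max u 0 by rewrite le_max lexx.
by rewrite /hinge_gap; nra.
Qed.

Lemma hinge_gap_max u : hinge_gap u (2 * Num.max u 0) = 0.
Proof. by rewrite /hinge_gap; case: (lerP 0 u) => hu; field. Qed.

Lemma reg_gap_ge0 eta lam m v : 0 < eta -> 0 < lam -> 0 <= m -> 0 <= reg_gap eta lam m v.
Proof.
move=> he hl hm; have hc : 0 < lam * eta / 2 by rewrite divr_gt0 ?mulr_gt0.
rewrite /reg_gap; case: (lerP (v - lam) 0) => hv.
  by rewrite mul0r expr0n /= mulr0 addr0; nra.
have -> : lam * m + lam * eta / 2 * m ^+ 2 - v * m
          + lam * eta / 2 * ((v - lam) / (lam * eta)) ^+ 2
        = lam * eta / 2 * (m - (v - lam) / (lam * eta)) ^+ 2.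
  by field; rewrite !gt_eqF.
by rewrite mulr_ge0 ?sqr_ge0 ?ltW.
Qed.

Lemma reg_gap_eq0 eta lam m v : 0 < eta -> 0 < lam -> 0 <= m ->
  0 <= - v + lam * (1 + eta * m) -> (0 < m -> - v + lam * (1 + eta * m) = 0) ->
  reg_gap eta lam m v = 0.
Proof.
move=> he hl hm hg hz; have hc : 0 < lam * eta by apply: mulr_gt0.
rewrite /reg_gap; case: (ltrP 0 m) => hm0.
  have hv : v = lam + lam * eta * m by have := hz hm0; lra.
  rewrite max_l; last by rewrite hv; nra.
  by rewrite hv; field; rewrite !gt_eqF.
have -> : m = 0 by apply/eqP; rewrite eq_le hm0 hm.
by rewrite max_r; [rewrite mul0r expr0n /=; ring | nra].
Qed.

End ScalarFacts.

Section DualVectors.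
Variables (R : realType) (n : nat) (D S : 'I_n -> {set 'I_n}).
Implicit Types (a b th : R) (u w z : dvec R n).

Definition psum (FD FS : 'I_n -> 'I_n -> R) : R :=
  \sum_(i < n) (\sum_(l in D i) FD i l + \sum_(j in S i) FS i j).

Lemma psumD FD FS GD GS :
  psum (fun i l => FD i l + GD i l) (fun i j => FS i j + GS i j) =
  psum FD FS + psum GD GS.
Proof.
rewrite /psum -big_split /=; apply: eq_bigr => i _.
by rewrite !big_split /= addrACA.
Qed.

Lemma psumZ c FD FS :
  psum (fun i l => c * FD i l) (fun i j => c * FS i j) = c * psum FD FS.
Proof. by rewrite /psum mulr_sumr; apply: eq_bigr => i _; rewrite mulrDr !mulr_sumr. Qed.

Lemma eq_psum FD FS GD GS :
  (forall i l, l \in D i -> FD i l = GD i l) ->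
  (forall i j, j \in S i -> FS i j = GS i j) ->
  psum FD FS = psum GD GS.
Proof. by move=> h1 h2; apply: eq_bigr => i _; congr (_ + _); apply: eq_bigr => j hj; auto. Qed.

Lemma ler_psum FD FS GD GS :
  (forall i l, l \in D i -> FD i l <= GD i l) ->
  (forall i j, j \in S i -> FS i j <= GS i j) ->
  psum FD FS <= psum GD GS.
Proof. by move=> h1 h2; apply: ler_sum => i _; apply: lerD; apply: ler_sum => j hj; auto. Qed.

Lemma psum_ge0 FD FS :
  (forall i l, l \in D i -> 0 <= FD i l) ->
  (forall i j, j \in S i -> 0 <= FS i j) ->
  0 <= psum FD FS.
Proof. by move=> h1 h2; apply: sumr_ge0 => i _; apply: addr_ge0; apply: sumr_ge0 => j hj; auto. Qed.

Lemma exchange_psum p (F G : 'I_p -> 'I_n -> 'I_n -> R) :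
  \sum_(k < p) psum (F k) (G k) =
  psum (fun i l => \sum_(k < p) F k i l) (fun i j => \sum_(k < p) G k i j).
Proof.
rewrite /psum exchange_big /=; apply: eq_bigr => i _.
by rewrite big_split /= exchange_big /= [X in _ + X]exchange_big.
Qed.

Definition dinner u w : R :=
  psum (fun i l => aD u i l * aD w i l) (fun i j => aS u i j * aS w i j).

Definition dlin a b u w : dvec R n :=
  DVec (fun i l => a * aD u i l + b * aD w i l) (fun i j => a * aS u i j + b * aS w i j).

Definition dscale a u : dvec R n := dlin a 0 u u.

Lemma dinnerC u w : dinner u w = dinner w u.
Proof. by apply: eq_psum => *; rewrite mulrC. Qed.

Lemma dinner_linl a b u w z : dinner (dlin a b u w) z = a * dinner u z + b * dinner w z.
Proof. by rewrite /dinner -!psumZ -psumD; apply: eq_psum => * /=; ring. Qed.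

Lemma dinner_linr a b u w z : dinner z (dlin a b u w) = a * dinner z u + b * dinner z w.
Proof. by rewrite dinnerC dinner_linl !(dinnerC z). Qed.

Lemma dinner_scalel a u w : dinner (dscale a u) w = a * dinner u w.
Proof. by rewrite dinner_linl mul0r addr0. Qed.

Lemma dinner_scaler a u w : dinner w (dscale a u) = a * dinner w u.
Proof. by rewrite dinnerC dinner_scalel dinnerC. Qed.

Lemma dinner_subl u w z : dinner (dsub u w) z = dinner u z - dinner w z.
Proof. by rewrite /dinner -mulN1r -psumZ -psumD; apply: eq_psum => * /=; ring. Qed.

Lemma dnorm2_sub u w :
  dinner (dsub u w) (dsub u w) = dinner u u - 2 * dinner u w + dinner w w.
Proof. by rewrite !dinner_subl !(dinnerC _ (dsub u w)) !dinner_subl (dinnerC w u); ring. Qed.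

Lemma dnorm2_conv th u w :
  dinner (dlin (1 - th) th u w) (dlin (1 - th) th u w) =
  (1 - th) * dinner u u + th * dinner w w - th * (1 - th) * dinner (dsub u w) (dsub u w).
Proof. by rewrite dnorm2_sub dinner_linl !dinner_linr (dinnerC w u); ring. Qed.

Lemma dinner_ge0 u : 0 <= dinner u u.
Proof. by apply: psum_ge0 => *; rewrite -expr2 sqr_ge0. Qed.

Lemma dnorm2E u : dnorm2 D S u = dinner u u.
Proof. by apply: eq_psum => *; rewrite expr2. Qed.

Lemma dnormE u : dnorm D S u = Num.sqrt (dinner u u).
Proof. by rewrite /dnorm dnorm2E. Qed.

Lemma dinner_CS u w : `|dinner u w| <= Num.sqrt (dinner u u) * Num.sqrt (dinner w w).
Proof.
have hX2 : dinner u w ^+ 2 <= dinner u u * dinner w w.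
  apply: discriminant_le (dinner_ge0 u) _ => t.
  have := dinner_ge0 (dlin t (-1) u w).
  by rewrite dinner_linl !dinner_linr (dinnerC w u); lra.
by rewrite -sqrtrM ?dinner_ge0 // -sqrtr_sqr ler_wsqrtr.
Qed.

Lemma dnorm_le_add_dist u w :
  Num.sqrt (dinner w w) <= Num.sqrt (dinner u u) + Num.sqrt (dinner (dsub u w) (dsub u w)).
Proof.
set nu := Num.sqrt (dinner u u); set nw := Num.sqrt (dinner w w).
set nd := Num.sqrt (dinner (dsub u w) (dsub u w)).
have [nu0 nw0 nd0] : [/\ 0 <= nu, 0 <= nw & 0 <= nd] by rewrite !sqrtr_ge0.
have hw : nw ^+ 2 = dinner u w - dinner (dsub u w) w.
  by rewrite sqr_sqrtr ?dinner_ge0 // dinner_subl; ring.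
have := ler_normlW (dinner_CS u w); have := lerNnormlW (dinner_CS (dsub u w) w).
rewrite -/nu -/nw -/nd => h1 h2; nra.
Qed.

Lemma dinner_le_ball c r u u0 z : 0 <= r ->
  dinner (dsub u (dscale c u0)) (dsub u (dscale c u0)) <= r ^+ 2 * dinner u0 u0 ->
  dinner u z <= r * Num.sqrt (dinner u0 u0) * Num.sqrt (dinner z z) + c * dinner u0 z.
Proof.
move=> r_ge0 hball.
have -> : dinner u z = dinner (dsub u (dscale c u0)) z + c * dinner u0 z.
  by rewrite dinner_subl dinner_scalel; ring.
rewrite lerD2r; apply: le_trans (ler_normlW (dinner_CS _ _)) _.
rewrite ler_wpM2r ?sqrtr_ge0 // -[r]ger0_norm // -sqrtr_sqr -sqrtrM ?sqr_ge0 //.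
exact: ler_wsqrtr.
Qed.

Lemma dinner_le_dist u w z :
  dinner w z <= dinner u z + Num.sqrt (dinner (dsub u w) (dsub u w)) * Num.sqrt (dinner z z).
Proof.
have := lerNnormlW (dinner_CS (dsub u w) z).
by rewrite [dinner (dsub u w) z]dinner_subl; lra.
Qed.

Lemma dnonneg_lin a b u w : 0 <= a -> 0 <= b ->
  dnonneg D S u -> dnonneg D S w -> dnonneg D S (dlin a b u w).
Proof. by move=> ha hb [u1 u2] [w1 w2]; split=> i l hl /=; rewrite addr_ge0 ?mulr_ge0; auto. Qed.

End DualVectors.

Section DualObjective.
Variables (R : realType) (n p : nat) (x : 'I_n -> 'I_p -> R).
Variables (D S : 'I_n -> {set 'I_n}).
Variables (L U eta : R).
Hypothesis eta_gt0 : 0 < eta.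
Implicit Types (a b c s th lam : R) (u w al be : dvec R n).

Local Notation dinner := (dinner D S).
Local Notation Cmul := (Cmul x D S).
Local Notation Dobj := (Dobj x D S L U eta).

Definition cdv (k : 'I_p) : dvec R n :=
  DVec (fun i l => cvec x i l k) (fun i j => - cvec x i j k).

Definition tdv : dvec R n := DVec (fun _ _ => L) (fun _ _ => - U).

Lemma CmulE al k : Cmul al k = dinner al (cdv k).
Proof.
apply: eq_bigr => i _ /=; congr (_ + _); rewrite -sumrN.
by apply: eq_bigr => j _; rewrite mulrN.
Qed.

Lemma Cmul_lin a b u w k : Cmul (dlin a b u w) k = a * Cmul u k + b * Cmul w k.
Proof. by rewrite !CmulE dinner_linl. Qed.

Definition dual_pen lam al : R :=
  lam * eta / 2 * \sum_(k < p) (Num.max (Cmul al k - lam) 0 / (lam * eta)) ^+ 2.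

Lemma DobjE lam al : Dobj lam al = - (1 / 4) * dinner al al + dinner al tdv - dual_pen lam al.
Proof.
rewrite /Dobj dnorm2E; congr (_ + _ - _).
by apply: eq_psum => * /=; rewrite mulrC.
Qed.

Lemma dual_penZ c lam al : 0 < c -> 0 < lam ->
  dual_pen (c * lam) (dscale c al) = c * dual_pen lam al.
Proof.
move=> hc hlam; rewrite /dual_pen mulr_sumr mulr_sumr [RHS]mulr_sumr.
apply: eq_bigr => k _; rewrite Cmul_lin mul0r addr0 -mulrBr.
have [hk|hk] := lerP (Cmul al k - lam) 0.
  by rewrite !max_r ?pmulr_rle0 // !mul0r expr0n /= !mulr0.
rewrite !max_l ?pmulr_rge0 ?(ltW hk) //.
by field; rewrite !gt_eqF.
Qed.

Lemma dual_pen_convex lam th u w : 0 < lam -> 0 <= th <= 1 ->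
  dual_pen lam (dlin (1 - th) th u w) <= (1 - th) * dual_pen lam u + th * dual_pen lam w.
Proof.
move=> hlam hth; rewrite /dual_pen !mulr_sumr -big_split /=.
set q := lam * eta / 2 / (lam * eta) ^+ 2.
have hq v : lam * eta / 2 * (v / (lam * eta)) ^+ 2 = q * v ^+ 2.
  by rewrite /q; field; rewrite !gt_eqF.
have q0 : 0 <= q by rewrite divr_ge0 ?exprn_ge0 ?divr_ge0 // ltW ?mulr_gt0.
apply: ler_sum => k _; rewrite !hq [(1 - th) * _]mulrCA [th * _]mulrCA -mulrDr ler_wpM2l //.
have -> : Cmul (dlin (1 - th) th u w) k - lam =
          (1 - th) * (Cmul u k - lam) + th * (Cmul w k - lam) by rewrite Cmul_lin; ring.
exact: sqr_maxr0_convex.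
Qed.

Lemma Dobj_strongly_concave lam th u w : 0 < lam -> 0 <= th <= 1 ->
  (1 - th) * Dobj lam u + th * Dobj lam w + th * (1 - th) / 4 * dinner (dsub u w) (dsub u w)
  <= Dobj lam (dlin (1 - th) th u w).
Proof.
move=> hlam hth; have := dual_pen_convex u w hlam hth.
rewrite !DobjE dnorm2_conv dinner_linl; lra.
Qed.

Definition dual_sharp_max lam al : Prop :=
  forall be, dnonneg D S be ->
  Dobj lam be + dinner (dsub al be) (dsub al be) / 4 <= Dobj lam al.

Lemma dual_sharp_max_of_max lam al0 : 0 < lam -> dnonneg D S al0 ->
  (forall al, dnonneg D S al -> Dobj lam al <= Dobj lam al0) -> dual_sharp_max lam al0.
Proof.
move=> hlam h0 hmax be hbe.
suff : dinner (dsub al0 be) (dsub al0 be) / 4 <= Dobj lam al0 - Dobj lam be by lra.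
apply: ler_of_forall_shrink => [|th /andP[th0 th1]]; first by rewrite divr_ge0 ?dinner_ge0.
have hth : 0 <= th <= 1 by rewrite (ltW th0) th1.
have th'_ge0 : 0 <= 1 - th by lra.
have hcomb := hmax _ (dnonneg_lin th'_ge0 (ltW th0) h0 hbe).
have hconc := Dobj_strongly_concave al0 be hlam hth.
rewrite -(ler_pM2l th0); lra.
Qed.

Lemma dual_sharp_max_ball (lam0 : R) s (al0 : dvec R n) al : 0 < lam0 -> 0 < s ->
  dnonneg D S al0 -> dnonneg D S al ->
  dual_sharp_max lam0 al0 -> dual_sharp_max (s * lam0) al ->
  dinner (dsub al (dscale ((1 + s) / 2) al0)) (dsub al (dscale ((1 + s) / 2) al0))
  <= ((1 - s) / 2) ^+ 2 * dinner al0 al0.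
Proof.
move=> lam0_gt0 s_gt0 h0 h hmax0 hmax.
have hs0 : 0 < s^-1 by rewrite invr_gt0.
have hA := hmax _ (dnonneg_lin (ltW s_gt0) (lexx 0) h0 h0 : dnonneg D S (dscale s al0)).
have hB := hmax0 _ (dnonneg_lin (ltW hs0) (lexx 0) h h : dnonneg D S (dscale s^-1 al)).
have hpen : dual_pen lam0 (dscale s^-1 al) = s^-1 * dual_pen (s * lam0) al.
  by rewrite -dual_penZ ?mulr_gt0 // mulrA mulVf ?gt_eqF ?mul1r.
rewrite !DobjE dual_penZ // !dnorm2_sub !dinner_scalel !dinner_scaler in hA.
rewrite !DobjE hpen !dnorm2_sub !dinner_scalel !dinner_scaler in hB.
rewrite dnorm2_sub !dinner_scalel !dinner_scaler (dinnerC _ _ al0 al) in hA hB *.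
set N := dinner al al in hA hB *; set N0 := dinner al0 al0 in hA hB *.
set X := dinner al al0 in hA hB *.
set T := dinner al tdv in hA hB; set T0 := dinner al0 tdv in hA hB.
set P := dual_pen (s * lam0) al in hA hB; set P0 := dual_pen lam0 al0 in hA hB.
have hB' : T - P + s * N0 / 2 - X / 2 <= s * T0 - s * P0.
  have -> : T - P + s * N0 / 2 - X / 2 =
            s * (s^-1 * T - s^-1 * P + N0 / 2 - s^-1 * X / 2) by field; rewrite gt_eqF.
  by rewrite -[s * T0 - s * P0]mulrBr ler_pM2l //; lra.
have hsum : N - (1 + s) * X + s * N0 <= 0 by lra.
have -> : N - 2 * ((1 + s) / 2 * X) + (1 + s) / 2 * ((1 + s) / 2 * N0) =
          N - (1 + s) * X + s * N0 + ((1 - s) / 2) ^+ 2 * N0 by field.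
lra.
Qed.

End DualObjective.

Section PrimalDual.
Variables (R : realType) (n p : nat) (x : 'I_n -> 'I_p -> R).
Variables (D S : 'I_n -> {set 'I_n}).
Variables (L U eta lam : R).
Hypotheses (eta_gt0 : 0 < eta) (lam_gt0 : 0 < lam).
Implicit Types (m : 'I_p -> R) (be : dvec R n).

Local Notation dinner := (dinner D S).
Local Notation psum := (psum D S).
Local Notation Cmul := (Cmul x D S).
Local Notation Pobj := (Pobj x D S L U eta lam).
Local Notation Dobj := (Dobj x D S L U eta lam).

Definition dual_of m : dvec R n :=
  DVec (fun i l => 2 * Num.max (L - mdotc x m i l) 0)
       (fun i j => 2 * Num.max (- U - - mdotc x m i j) 0).

Lemma dual_of_nonneg m : dnonneg D S (dual_of m).
Proof. by split=> i l _ /=; rewrite mulr_ge0 // le_max lexx orbT. Qed.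

Lemma psum_mdotc m be :
  psum (fun i l => aD be i l * mdotc x m i l) (fun i j => - (aS be i j * mdotc x m i j))
  = \sum_(k < p) Cmul be k * m k.
Proof.
under eq_bigr => k _ do rewrite CmulE mulrC -psumZ.
rewrite exchange_psum; apply: eq_psum => i l _ /=;
  by rewrite /mdotc ?mulr_sumr -?sumrN; apply: eq_bigr => k _; ring.
Qed.

Lemma Pobj_sub_Dobj m be :
  Pobj m - Dobj be =
  psum (fun i l => hinge_gap (L - mdotc x m i l) (aD be i l))
       (fun i j => hinge_gap (- U - - mdotc x m i j) (aS be i j))
  + \sum_(k < p) reg_gap eta lam (m k) (Cmul be k).
Proof.
have -> : \sum_(k < p) reg_gap eta lam (m k) (Cmul be k) =
  lam * (\sum_(k < p) m k + eta / 2 * \sum_(k < p) m k ^+ 2)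
  - \sum_(k < p) Cmul be k * m k + dual_pen x D S eta lam be.
  rewrite /reg_gap /dual_pen !big_split /= sumrN mulrDr !mulr_sumr.
  by congr (_ + _ + _ + _); apply: eq_bigr => k _; rewrite !mulrA.
rewrite DobjE -psum_mdotc /Pobj.
rewrite (eq_psum (GD := fun i l => sqhinge L (mdotc x m i l) + ((-1) * (aD be i l * L)
      + (aD be i l * mdotc x m i l + (1/4) * (aD be i l * aD be i l))))
  (GS := fun i j => sqhinge (- U) (- mdotc x m i j) + ((-1) * (aS be i j * - U)
      + (- (aS be i j * mdotc x m i j) + (1/4) * (aS be i j * aS be i j))))); last first.
- by move=> i j _; rewrite /hinge_gap /sqhinge; ring.
- by move=> i l _; rewrite /hinge_gap /sqhinge; ring.
rewrite !psumD !psumZ /dinner.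
set T := psum (fun i l => aD be i l * L) _.
have -> : T = dinner be (tdv n L U) by [].
rewrite /psum; ring.
Qed.

Lemma Pobj_ge_Dobj m be : (forall k, 0 <= m k) -> dnonneg D S be ->
  Dobj be + dinner (dsub (dual_of m) be) (dsub (dual_of m) be) / 4 <= Pobj m.
Proof.
move=> hm [hD hS]; have := Pobj_sub_Dobj m be.
have hreg : 0 <= \sum_(k < p) reg_gap eta lam (m k) (Cmul be k).
  by apply: sumr_ge0 => k _; apply: reg_gap_ge0.
suff : dinner (dsub (dual_of m) be) (dsub (dual_of m) be) / 4 <=
       psum (fun i l => hinge_gap (L - mdotc x m i l) (aD be i l))
            (fun i j => hinge_gap (- U - - mdotc x m i j) (aS be i j)) by lra.
rewrite mulrC -psumZ; apply: ler_psum => i l hl /=.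
  by have := hinge_gap_ge (L - mdotc x m i l) (hD _ _ hl); lra.
by have := hinge_gap_ge (- U - - mdotc x m i l) (hS _ _ hl); lra.
Qed.

Definition upd m k h : 'I_p -> R := fun k' => if k' == k then m k' + h else m k'.

Lemma sum_upd (F G : 'I_p -> R) k : (forall k', k' != k -> F k' = G k') ->
  \sum_(k' < p) F k' = \sum_(k' < p) G k' + (F k - G k).
Proof.
move=> h; rewrite (bigD1 k) //= [in RHS](bigD1 k) //= (eq_bigr G) => [|k' /h //].
ring.
Qed.

Lemma mdotc_upd m k h i l : mdotc x (upd m k h) i l = mdotc x m i l + h * cvec x i l k.
Proof.
rewrite /mdotc (@sum_upd _ (fun k' => m k' * cvec x i l k') k) /upd ?eqxx; first ring.
by move=> k' /negbTE ->.
Qed.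

Definition primal_grad m k : R := - Cmul (dual_of m) k + lam * (1 + eta * m k).

Definition upd_curv k : R :=
  psum (fun i l => cvec x i l k ^+ 2) (fun i j => cvec x i j k ^+ 2) + lam * eta / 2.

Lemma upd_curv_ge0 k : 0 <= upd_curv k.
Proof.
rewrite addr_ge0 ?divr_ge0 ?mulr_ge0 ?(ltW eta_gt0) ?(ltW lam_gt0) //.
by apply: psum_ge0 => *; apply: sqr_ge0.
Qed.

Lemma Pobj_upd_le m k h :
  Pobj (upd m k h) <= Pobj m + h * primal_grad m k + h ^+ 2 * upd_curv k.
Proof.
have hloss : psum (fun i l => sqhinge L (mdotc x (upd m k h) i l))
                  (fun i j => sqhinge (- U) (- mdotc x (upd m k h) i j))
  <= psum (fun i l => sqhinge L (mdotc x m i l)) (fun i j => sqhinge (- U) (- mdotc x m i j))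
     + (- h) * Cmul (dual_of m) k
     + h ^+ 2 * psum (fun i l => cvec x i l k ^+ 2) (fun i j => cvec x i j k ^+ 2).
  rewrite CmulE -!psumZ -!psumD; apply: ler_psum => i l _ /=;
    rewrite /sqhinge mdotc_upd.
    have -> : L - (mdotc x m i l + h * cvec x i l k) =
              L - mdotc x m i l + - (h * cvec x i l k) by ring.
    by have := sqr_maxr0_addr (L - mdotc x m i l) (- (h * cvec x i l k)); lra.
  have -> : - U - - (mdotc x m i l + h * cvec x i l k) =
            - U - - mdotc x m i l + h * cvec x i l k by ring.
  by have := sqr_maxr0_addr (- U - - mdotc x m i l) (h * cvec x i l k); lra.
have hupd (F : R -> R) : \sum_(k' < p) F (upd m k h k') =
                         \sum_(k' < p) F (m k') + (F (m k + h) - F (m k)).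
  by rewrite (@sum_upd _ (F \o m) k) /upd ?eqxx // => k' /negbTE ->.
rewrite /Pobj (hupd id) (hupd (fun y => y ^+ 2)) /primal_grad /upd_curv /=.
move: hloss; rewrite /psum; lra.
Qed.

Section PrimalOptimum.
Variable mstar : 'I_p -> R.
Hypothesis mstar_ge0 : forall k, 0 <= mstar k.
Hypothesis mstar_min : forall m, (forall k, 0 <= m k) -> Pobj mstar <= Pobj m.

Lemma primal_kkt k :
  0 <= primal_grad mstar k /\ (0 < mstar k -> primal_grad mstar k = 0).
Proof.
have hc := upd_curv_ge0 k.
have hstep h : 0 <= mstar k + h -> 0 <= h * primal_grad mstar k + h ^+ 2 * upd_curv k.
  move=> hh; have hu k' : 0 <= upd mstar k h k' by rewrite /upd; case: eqP => [->|].
  by have := le_trans (mstar_min hu) (Pobj_upd_le mstar k h); lra.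
have g0 : 0 <= primal_grad mstar k.
  apply: (ge0_of_small_steps ltr01 hc) => h /andP[h0 _]; apply: hstep.
  by have := mstar_ge0 k; lra.
split=> // mk0; apply/eqP; rewrite eq_le g0 andbT -oppr_ge0.
apply: (ge0_of_small_steps mk0 hc) => h /andP[h0 h1].
by have := hstep (- h); rewrite sqrrN; lra.
Qed.

Lemma Pobj_le_Dobj_dual_of : Pobj mstar <= Dobj (dual_of mstar).
Proof.
have := Pobj_sub_Dobj mstar (dual_of mstar).
rewrite big1 => [|k _]; last first.
  by have [g0 gz] := primal_kkt k; apply: reg_gap_eq0.
rewrite /psum big1 => [|i _]; first lra.
by rewrite !big1 ?addr0 // => j _; apply: hinge_gap_max.
Qed.

Lemma dual_of_sharp_max : dual_sharp_max x D S L U eta lam (dual_of mstar).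
Proof.
move=> be hbe; have := Pobj_ge_Dobj mstar_ge0 hbe.
by have := Pobj_le_Dobj_dual_of; lra.
Qed.

Lemma primal_opt_eq0 k : Cmul (dual_of mstar) k <= lam -> mstar k = 0.
Proof.
move=> hC; apply/eqP; rewrite eq_le mstar_ge0 andbT leNgt; apply/negP => hk.
have := (primal_kkt k).2 hk; rewrite /primal_grad => hg.
have : 0 < lam * eta * mstar k by rewrite !mulr_gt0.
lra.
Qed.

End PrimalOptimum.

End PrimalDual.

Section BinaryFeatures.
Variables (R : realType) (n p : nat) (x : 'I_n -> 'I_p -> R).
Variables (D S : 'I_n -> {set 'I_n}).
Hypothesis x_binary : forall i k, x i k = 0 \/ x i k = 1.

Local Notation dinner := (dinner D S).

Lemma binary_ge0 i k : 0 <= x i k.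
Proof. by case: (x_binary i k) => ->; rewrite ?ler01. Qed.

Lemma binary_le1 i k : x i k <= 1.
Proof. by case: (x_binary i k) => ->; rewrite ?ler01. Qed.

Lemma maxr_binary_sqr i l k : Num.max (x i k) (x l k) ^+ 2 <= Num.max (x i k) (x l k).
Proof.
have h0 : 0 <= Num.max (x i k) (x l k) by rewrite le_max binary_ge0.
have h1 : Num.max (x i k) (x l k) <= 1 by rewrite ge_max !binary_le1.
nra.
Qed.

Lemma rule_bE k : rule_b x D S k =
  Num.sqrt (psum D S (fun i l => Num.max (x i k) (x l k)) (fun i j => Num.max (x i k) (x j k))).
Proof. by []. Qed.

Lemma rule_a_le_dnorm al k : dnonneg D S al ->
  rule_a x D S al k <= Num.sqrt (dinner al al) * rule_b x D S k.
Proof.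
move=> [hD hS].
set w := DVec (fun i l => Num.max (x i k) (x l k)) (fun _ _ => 0 : R).
have ha : rule_a x D S al k <= dinner al w.
  apply: ler_sum => i _ /=; rewrite [X in _ <= _ + X]big1 ?addr0 => [|j _]; last exact: mulr0.
  rewrite ge_max; apply/andP; split.
    by apply: ler_sum => l hl; rewrite ler_wpM2l ?hD // le_max lexx orbT.
  case: (x_binary i k) => ->.
    rewrite mul0r; apply: sumr_ge0 => l hl.
    by rewrite mulr_ge0 ?hD // le_max lexx.
  have hS0 : 0 <= \sum_(j in S i) aS al i j * (1 - x j k).
    by apply: sumr_ge0 => j hj; rewrite mulr_ge0 ?hS ?subr_ge0 ?binary_le1.
  have hD1 : \sum_(l in D i) aD al i l <= \sum_(l in D i) aD al i l * Num.max 1 (x l k).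
    by apply: ler_sum => l hl; rewrite ler_peMr ?hD // le_max lexx.
  lra.
have hw : dinner w w <= rule_b x D S k ^+ 2.
  rewrite rule_bE sqr_sqrtr; last by apply: psum_ge0 => *; rewrite le_max binary_ge0.
  apply: ler_psum => i l _ /=; rewrite -expr2 ?maxr_binary_sqr //.
  by rewrite expr0n le_max binary_ge0.
apply: (le_trans ha); apply: (le_trans (ler_normlW (dinner_CS _ _ al w))).
apply: ler_wpM2l; first exact: sqrtr_ge0.
rewrite -(ger0_norm (sqrtr_ge0 _ : 0 <= rule_b x D S k)) -sqrtr_sqr.
exact: ler_wsqrtr hw.
Qed.

Section Descendant.
Variables k k' : 'I_p.
Hypothesis x_le : forall i, x i k' <= x i k.

Lemma cvec_sqr_le i l : cvec x i l k' ^+ 2 <= Num.max (x i k) (x l k).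
Proof.
apply: (@le_trans _ _ (Num.max (x i k') (x l k'))); last by rewrite ge_max !le_max !x_le orbT.
by rewrite /cvec; case: (x_binary i k') => ->; case: (x_binary l k') => ->;
  rewrite le_max; apply/orP; [left | right | left | left]; rewrite !expr2; lra.
Qed.

Lemma dnorm_cdv_le : Num.sqrt (dinner (cdv x k') (cdv x k')) <= rule_b x D S k.
Proof.
rewrite rule_bE ler_wsqrtr //; apply: ler_psum => i l _ /=; rewrite ?mulrNN -expr2;
  exact: cvec_sqr_le.
Qed.

Lemma Cmul_le_rule_a al : dnonneg D S al -> Cmul x D S al k' <= rule_a x D S al k.
Proof.
move=> [hD hS]; apply: ler_sum => i _.
have hc0 (y : R) : y = 0 \/ y = 1 -> (0 - y) ^+ 2 = y by case=> ->; ring.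
have hc1 (y : R) : y = 0 \/ y = 1 -> (1 - y) ^+ 2 = 1 - y by case=> ->; ring.
have hS0 : 0 <= \sum_(j in S i) aS al i j * cvec x i j k'.
  by apply: sumr_ge0 => j hj; rewrite mulr_ge0 ?hS ?sqr_ge0.
case: (x_binary i k') => hik'.
  have hD' : \sum_(l in D i) aD al i l * cvec x i l k' <= \sum_(l in D i) aD al i l * x l k.
    by apply: ler_sum => l hl; rewrite /cvec hik' hc0 // ler_wpM2l ?hD.
  rewrite le_max; apply/orP; left; lra.
have hik : x i k = 1.
  by case: (x_binary i k) => // hik0; have := x_le i; rewrite hik' hik0; lra.
rewrite hik mul1r le_max; apply/orP; right; apply: lerB.
  apply: ler_sum => l hl; rewrite /cvec hik' hc1 //.
  by have := binary_ge0 l k'; have := hD _ _ hl; nra.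
apply: ler_sum => j hj; rewrite /cvec hik' hc1 //.
by have := x_le j; have := hS _ _ hj; nra.
Qed.

End Descendant.

End BinaryFeatures.

Lemma screening_bound_le (R : realFieldType) (lam lam0 eps na a b : R) :
  0 < lam -> lam <= lam0 -> 0 <= b -> a <= na * b ->
  lam0 * (2 * eps * b + na * b + a) / (2 * lam0 + na * b - a) <= lam ->
  (1 - lam / lam0) / 2 * (na + eps) * b + (1 + lam / lam0) / 2 * (a + eps * b) <= lam.
Proof.
move=> lam_gt0 lam_le b_ge0 hab; have lam0_gt0 : 0 < lam0 by apply: lt_le_trans lam_le.
have den_gt0 : 0 < 2 * lam0 + na * b - a by lra.
rewrite ler_pdivrMr // => hrule.
rewrite -(ler_pM2l (_ : 0 < 2 * lam0)); last lra.
have -> : 2 * lam0 * ((1 - lam / lam0) / 2 * (na + eps) * b + (1 + lam / lam0) / 2 * (a + eps * b))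
          = lam0 * (2 * eps * b + na * b + a) + lam * (a - na * b).
  by field; rewrite gt_eqF.
lra.
Qed.

Lemma descendant_le (R : realType) (n p : nat) (x : 'I_n -> 'I_p -> R) parent k' k :
  (forall i k1, x i k1 <= x i (parent k1)) -> descendant parent k' k ->
  forall i, x i k' <= x i k.
Proof.
move=> x_mono [t <-] i; elim: t => //= t IH.
exact: le_trans IH (x_mono _ _).
Qed.

Theorem theorem8 (R : realType) (n K p : nat)
  (x : 'I_n -> 'I_p -> R) (D S : 'I_n -> {set 'I_n})
  (parent : 'I_p -> 'I_p) (root : 'I_p)
  (L U eta lam lam0 eps : R)
  (alpha0star alpha0 : dvec R n) (mstar : 'I_p -> R) (k : 'I_p) :
  (forall i, #|D i| = K) -> (forall i, #|S i| = K) ->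
  (0 <= U) -> (U <= L) -> (0 < eta) ->
  (* the feature tree: features are anti-monotone along the tree *)
  rooted_tree parent root ->
  (forall i k1, x i k1 <= x i (parent k1)) ->
  (* binary features *)
  (forall i k1, x i k1 = 0 \/ x i k1 = 1) ->
  (0 < lam) -> (lam <= lam0) ->
  (* alpha0star maximizes D_{lam0} over alpha >= 0 *)
  dnonneg D S alpha0star ->
  (forall al, dnonneg D S al ->
     Dobj x D S L U eta lam0 al <= Dobj x D S L U eta lam0 alpha0star) ->
  dnonneg D S alpha0 -> 0 <= eps ->
  dnorm D S (dsub alpha0 alpha0star) <= eps ->
  (* mstar minimizes P_lam over m >= 0 *)
  (forall k1, 0 <= mstar k1) ->
  (forall m : 'I_p -> R, (forall k1, 0 <= m k1) ->
     Pobj x D S L U eta lam mstar <= Pobj x D S L U eta lam m) ->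
  lambda_a x D S lam0 eps alpha0 k <= lam ->
  forall k', descendant parent k' k -> mstar k' = 0.
Proof.
move=> _ _ _ _ eta_gt0 _ x_mono x_bin lam_gt0 lam_le star0_ge0 star0_max a0_ge0 _ hdist
  mstar_ge0 mstar_min hrule k' hk'.
have lam0_gt0 : 0 < lam0 := lt_le_trans lam_gt0 lam_le.
have x_le := descendant_le x_mono hk'.
set s := lam / lam0; set al := dual_of x L U mstar; set z := cdv x k'.
set b := rule_b x D S k; set na := dnorm D S alpha0.
have s_gt0 : 0 < s by rewrite divr_gt0.
have s_le1 : s <= 1 by rewrite ler_pdivrMr // mul1r.
have hmax : dual_sharp_max x D S L U eta (s * lam0) al.
  by rewrite /s divfK ?gt_eqF //; apply: dual_of_sharp_max.
have hball := dual_sharp_max_ball eta_gt0 lam0_gt0 s_gt0 star0_ge0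
  (dual_of_nonneg x D S L U mstar) (dual_sharp_max_of_max eta_gt0 lam0_gt0 star0_ge0 star0_max) hmax.
have hz : Num.sqrt (dinner D S z z) <= b := dnorm_cdv_le D S x_bin x_le.
have hstar_norm : Num.sqrt (dinner D S alpha0star alpha0star) <= na + eps.
  by have := dnorm_le_add_dist D S alpha0 alpha0star; rewrite /na !dnormE in hdist *; lra.
have hstar_dot : dinner D S alpha0star z <= rule_a x D S alpha0 k + eps * b.
  have := dinner_le_dist D S alpha0 alpha0star z.
  have := Cmul_le_rule_a x_bin x_le a0_ge0; rewrite CmulE -/z dnormE in hdist *.
  have := ler_pM (sqrtr_ge0 _) (sqrtr_ge0 _) hdist hz; lra.
apply: (primal_opt_eq0 eta_gt0 lam_gt0 mstar_ge0 mstar_min).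
apply: le_trans (screening_bound_le lam_gt0 lam_le (sqrtr_ge0 _) _ hrule); last first.
  by rewrite /na dnormE; apply: rule_a_le_dnorm.
rewrite CmulE; apply: le_trans (dinner_le_ball _ (_ : 0 <= (1 - s) / 2) hball) _; first lra.
apply: lerD; last by rewrite ler_wpM2l //; lra.
by rewrite ler_pM ?mulr_ge0 ?sqrtr_ge0 ?ler_wpM2l //; lra.
Qed.
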